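(* Let $P$ be a program and $G$ an execution graph with $\mathrm{cons}^P(G)$ and $\mathit{BE}(G)$, and let $T$ be a thread and $q$ an iteration index with $\mathit{fail}_G^T(q)$. Then $\mathrm{cons}^P(G-(T,q))$.
   Context: Programs. There are finite sets $\mathit{Register}$, $\mathit{Value}$, $\mathit{Location}$; $\mathit{State}=\mathit{Register}\to\mathit{Value}$; an update is a partial map $\mathit{Register}\rightharpoonup\mathit{Value}$, and $(\sigma\ll\mu)(r)=\mu(r)$ if $r\in\mathrm{Dom}(\mu)$, else $\sigma(r)$. Events are reads $R^m(x)$, writes $W^m(x,v)$, fences $F^m$, error $E$. A program $P$ consists of a finite set $\mathcal T$ of threads, each $T$ with a finite statement sequence $P_T(0),\dots,P_T(|P_T|-1)$. A statement is $\mathtt{step}(\epsilon,\delta)$ with $\epsilon:\mathit{State}\to\mathit{Event}$, $\delta:\mathit{State}\times(\mathit{Value}\cup\{\bot\})\to\mathit{Update}$, or $\mathtt{await}(n,\kappa)$ with $n\in\mathbb N$, $\kappa:\mathit{State}\to\{0,1\}$. Syntactic restriction: if $P_T(k)=\mathtt{await}(n,\cdot)$ then $n\le k$ and no $P_T(k')$ with $k'\in[k-n:k)$ is an await. ($[a:b)=\{a,\dots,b-1\}$.) An execution graph $G$ has a set $G.\mathrm E$ of triples $\langle T,t,e\rangle$ and a partial reads-from map $G.\mathrm{rf}$ from reads to writes. Thread-local semantics: $k_G^T(0)=0$, $\sigma_G^T(0)$ fixed; if $k_G^T(t)\ge|P_T|$ or no triple $\langle T,t,\cdot\rangle$ is in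 $G.\mathrm E$, execution stops ($N_G^T=t$). Otherwise with $S=P_T(k_G^T(t))$: $e_G^T(t)=\epsilon(\sigma_G^T(t))$ for $S=\mathtt{step}(\epsilon,\cdot)$, $F^{\mathrm{rlx}}$ for an await; $v_G^T(t)$ is the value of the write that $G.\mathrm{rf}$ assigns to $\langle T,t,e_G^T(t)\rangle$ if this is a read with defined rf, else $\bot$. For a step: $k_G^T(t+1)=k_G^T(t)+1$; if $e_G^T(t)$ is a read with $v_G^T(t)=\bot$ then $N_G^T=t+1$, $\sigma_G^T(t+1)=\sigma_G^T(t)$, else $\sigma_G^T(t+1)=\sigma_G^T(t)\ll\delta(\sigma_G^T(t),v_G^T(t))$. For $\mathtt{await}(n,\kappa)$: $\sigma_G^T(t+1)=\sigma_G^T(t)$ and $k_G^T(t+1)=k_G^T(t)+1$ if $\kappa(\sigma_G^T(t))=0$, else $k_G^T(t)-n$. $\mathrm{cons}^P(G)$ holds iff $G.\mathrm E=\{\langle T,t,e_G^T(t)\rangle\mid T\in\mathcal T,\ t<N_G^T\}$. Awaits: $\mathit{end}_G^T(0)<\mathit{end}_G^T(1)<\cdots$ enumerate the steps $t$ at which $P_T(k_G^T(t))$ is an await; $\mathit{len}_G^T(q)=n$ where $P_T(k_G^T(\mathit{end}_G^T(q)))=\mathtt{await}(n,\kappa)$; $\mathit{start}_G^T(q)=\mathit{end}_G^T(q)-\mathit{len}_G^T(q)$; $\mathit{fail}_G^T(q)$ iff $\kappa(\sigma_G^T(\mathit{end}_G^T(q)))=1$. Bounded effect. $\delta_G^T(t)=\delta(\sigma_G^T(t),v_G^T(t))$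 if $P_T(k_G^T(t))=\mathtt{step}(\cdot,\delta)$ and not ($e_G^T(t)$ is a read and $v_G^T(t)=\bot$); otherwise the empty update. $\mathit{vis}_G^T(t,u)=\mathrm{Dom}(\delta_G^T(t))\setminus\bigcup_{t<u'<u}\mathrm{Dom}(\delta_G^T(u'))$. $F(\mathtt{step}(\epsilon,\delta))=\{\epsilon,\delta\}$, $F(\mathtt{await}(n,\kappa))=\{\kappa\}$. A function $f$ depends on $R\subseteq\mathit{Register}$ iff there are states $\sigma,\sigma'$ agreeing outside $R$ with $f(\sigma)\neq f(\sigma')$ (for $f=\delta$: $\delta(\sigma,v)\neq\delta(\sigma',v)$ for some $v$). Step $t$ of $T$ register-reads-from to step $u$ ($t\to_{\mathrm{rrf}}u$) iff $u\ge t$ and some $f\in F(P_T(k_G^T(u)))$ depends on $\mathit{vis}_G^T(t,u)$. $\mathit{BE}(G)$ holds iff for all $T$, all $q$ with $\mathit{fail}_G^T(q)$ and all $t\in[\mathit{start}_G^T(q):\mathit{end}_G^T(q))$: $e_G^T(t)$ is not a write, and $t\to_{\mathrm{rrf}}u$ implies $u\in[\mathit{start}_G^T(q):\mathit{end}_G^T(q))$. Deletion. For a failed iteration $q$ of $T$, $G-(T,q)$ is the graph obtained by the partial renaming $r$: $r(\langle U,t,e\rangle)=\langle U,t,e\rangle$ if $U\neq T$ or $t<\mathit{start}_G^T(q)$; $r(\langle T,t,e\rangle)=\langle T,t-(\mathit{len}_G^T(q)+1),e\rangle$ if $t>\mathit{end}_G^T(q)$; undefined (event deleted) otherwise. Then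 $(G-(T,q)).\mathrm E=r(G.\mathrm E)$ and $(G-(T,q)).\mathrm{rf}(e)=r(G.\mathrm{rf}(r^{-1}(e)))$. *)

From mathcomp Require Import all_boot.
Set Implicit Arguments. Unset Strict Implicit. Unset Printing Implicit Defensive.

Section Model.
Context (Thread Register Location Value : finType) (Mode : Type).

Definition State := Register -> Value.
Definition Update := Register -> option Value.
Definition upd (s : State) (mu : Update) : State :=
  fun r => if mu r is Some v then v else s r.
Definition empty_update : Update := fun _ => None.
Definition in_dom (mu : Update) (r : Register) : bool := isSome (mu r).

Inductive Event :=
| ERead (m : Mode) (x : Location)
| EWrite (m : Mode) (x : Location) (v : Value)
| EFence (m : Mode)
| EError.

Definition is_read (e : Event) : bool := if e is ERead _ _ then true else false.
Definition is_write (e : Event) : bool := if e is EWrite _ _ _ then true else false.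
Definition write_val (e : Event) : option Value :=
  if e is EWrite _ _ v then Some v else None.

(* delta takes a value or bottom (None) *)
Inductive Stmt :=
| Step (eps : State -> Event) (delta : State -> option Value -> Update)
| Await (n : nat) (kappa : State -> bool).

Definition is_await (s : Stmt) : bool := if s is Await _ _ then true else false.

(* default statement, only used outside the code (never reached for k < size) *)
Definition dflt_stmt : Stmt := Step (fun _ => EError) (fun _ _ => empty_update).

Record Program := { code : Thread -> seq Stmt; init : Thread -> State }.

Definition stmt_at (P : Program) (T : Thread) (k : nat) : Stmt :=
  nth dflt_stmt (code P T) k.

Definition wf_program (P : Program) : Prop :=
  forall T k n kappa, k < size (code P T) ->
    stmt_at P T k = Await n kappa ->
    n <= k /\ (forall k', k - n <= k' < k -> ~~ is_await (stmt_at P T k')).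

Definition Triple := (Thread * nat * Event)%type.

Record Graph := { gE : Triple -> Prop; grf : Triple -> option Triple }.

Definition wf_graph (G : Graph) : Prop :=
  forall a b, grf G a = Some b ->
    gE G a /\ gE G b /\ is_read a.2 /\ is_write b.2.

Section Semantics.
Context (rlx : Mode) (P : Program) (G : Graph) (T : Thread).

Definition vof (x : Triple) : option Value :=
  if grf G x is Some w then write_val w.2 else None.

Definition ev_of (k : nat) (s : State) : Event :=
  match stmt_at P T k with
  | Step eps _ => eps s
  | Await _ _ => EFence rlx
  end.

Fixpoint conf (t : nat) : nat * State :=
  match t with
  | 0 => (0, init P T)
  | t'.+1 =>
    let (k, s) := conf t' in
    match stmt_at P T k with
    | Step eps delta =>
        let e := eps s in
        let v := vof (T, t', e) in
        (k.+1, if is_read e && ~~ isSome v then s else upd s (delta s v))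
    | Await n kappa => (if kappa s then k - n else k.+1, s)
    end
  end.

Definition kk (t : nat) : nat := (conf t).1.
Definition sg (t : nat) : State := (conf t).2.
Definition stmt_t (t : nat) : Stmt := stmt_at P T (kk t).
Definition ev (t : nat) : Event := ev_of (kk t) (sg t).
Definition vv (t : nat) : option Value := vof (T, t, ev t).
Definition readbot (t : nat) : bool := is_read (ev t) && ~~ isSome (vv t).

(* t < N_G^T  (N_G^T may be infinite) *)
Definition lt_N (t : nat) : Prop :=
  (forall t', t' <= t -> kk t' < size (code P T) /\ exists e, gE G (T, t', e))
  /\ (forall t', t' < t -> ~~ readbot t').

Definition delta_at (t : nat) : Update :=
  match stmt_t t with
  | Step _ d => if readbot t then empty_update else d (sg t) (vv t)
  | Await _ _ => empty_update
  end.

Definition vis (t u : nat) (r : Register) : bool :=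
  in_dom (delta_at t) r &&
  all (fun u' => ~~ in_dom (delta_at u') r) (iota t.+1 (u - t.+1)).

Definition depends {X : Type} (R : Register -> bool) (f : State -> X) : Prop :=
  exists s s' : State, (forall r, ~~ R r -> s r = s' r) /\ f s <> f s'.

Definition depF (S : Stmt) (R : Register -> bool) : Prop :=
  match S with
  | Step eps delta => depends R eps \/ exists v, depends R (fun s => delta s v)
  | Await _ kappa => depends R kappa
  end.

Definition rrf (t u : nat) : Prop := t <= u /\ depF (stmt_t u) (vis t u).

Definition is_end (q t : nat) : Prop :=
  lt_N t /\ is_await (stmt_t t) /\
  count (fun t' => is_await (stmt_t t')) (iota 0 t) = q.

Definition alen (t : nat) : nat := if stmt_t t is Await n _ then n else 0.
Definition akappa (t : nat) : bool :=
  if stmt_t t is Await _ kappa then kappa (sg t) else false.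

Definition fail_end (q t : nat) : Prop := is_end q t /\ akappa t.

End Semantics.

Definition cons (rlx : Mode) (P : Program) (G : Graph) : Prop :=
  forall x, gE G x <-> exists T t, lt_N rlx P G T t /\ x = (T, t, ev rlx P G T t).

Definition BE (rlx : Mode) (P : Program) (G : Graph) : Prop :=
  forall T q tend, fail_end rlx P G T q tend ->
  forall t, tend - alen P G T tend <= t < tend ->
    ~~ is_write (ev rlx P G T t) /\
    (forall u, lt_N rlx P G T u -> rrf rlx P G T t u ->
        tend - alen P G T tend <= u < tend).

(* deletion, given thread T, start s and length l (so end = s + l) *)
Definition ren (T : Thread) (s l : nat) (x : Triple) : option Triple :=
  let: (U, t, e) := x in
  if (U != T) || (t < s) then Some x
  else if s + l < t then Some (U, t - l.+1, e) else None.

Definition ren_inv (T : Thread) (s l : nat) (x : Triple) : Triple :=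
  let: (U, t, e) := x in
  if (U != T) || (t < s) then x else (U, t + l.+1, e).

Definition del (G : Graph) (T : Thread) (s l : nat) : Graph :=
  {| gE := fun x => exists y, gE G y /\ ren T s l y = Some x;
     grf := fun x => obind (ren T s l) (grf G (ren_inv T s l x)) |}.

End Model.

(* Deleting the failed iteration [s, tend] of thread T leaves the other threads
   alone and renumbers the later steps of T by -(l + 1).  No rf edge points into
   the deleted iteration: by BE it contains no write, and its closing await is a
   fence; so all reads keep their values and the run of T in G' coincides with
   the run in G before s.  From s on, the run in G' simulates the run in G from
   tend + 1: the failed await jumped back to the control point of step s, and
   the two states differ only on registers last written inside the deleted
   iteration, on which (BE again) no later statement depends.  Hence both runs
   perform the same events step by step, and the triples of G' are exactly the
   renamed triples of G. *)

From mathcomp Require Import all_boot zify.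
From Stdlib Require Import Classical FunctionalExtensionality.
Set Implicit Arguments. Unset Strict Implicit. Unset Printing Implicit Defensive.

Section States.
Variables (Register Value : finType) (X : Type).
Implicit Types (R : Register -> bool) (f : State Register Value -> X).

Definition agree_off R (s1 s2 : State Register Value) : Prop :=
  forall r, ~~ R r -> s1 r = s2 r.

Lemma nodepP R f s1 s2 : ~ depends R f -> agree_off R s1 s2 -> f s1 = f s2.
Proof. by move=> nodep agr; apply: NNPP => ne; apply: nodep; exists s1, s2. Qed.

Lemma nodepU R1 R2 f :
  ~ depends R1 f -> ~ depends R2 f -> ~ depends (fun r => R1 r || R2 r) f.
Proof.
move=> nodep1 nodep2 [s1 [s2 [agr []]]].
pose mid r := if R1 r then s2 r else s1 r.
transitivity (f mid).
  by apply: nodepP nodep1 _ => r /negbTE R1r; rewrite /mid R1r.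
apply: nodepP nodep2 _ => r R2r; rewrite /mid; case: ifP => // R1r.
by apply: agr; rewrite R1r.
Qed.

Lemma nodep_has (I : eqType) (V : I -> Register -> bool) (L : seq I) f :
  (forall i, i \in L -> ~ depends (V i) f) ->
  ~ depends (fun r => has (V ^~ r) L) f.
Proof.
elim: L => [_ [s1 [s2 [agr []]]]|i L IH nodepL].
  by congr f; apply: functional_extensionality => r; apply: agr.
apply: nodepU; first by apply: nodepL; rewrite mem_head.
by apply: IH => j jL; apply: nodepL; rewrite in_cons jL orbT.
Qed.

Lemma upd_out (s : State Register Value) mu r :
  ~~ in_dom mu r -> upd s mu r = s r.
Proof. by rewrite /upd /in_dom; case: (mu r). Qed.

Lemma upd_agree_off R (s1 s2 : State Register Value) mu :
  agree_off R s1 s2 ->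
  agree_off (fun r => R r && ~~ in_dom mu r) (upd s1 mu) (upd s2 mu).
Proof.
move=> agr r; rewrite /upd /in_dom; case: (mu r) => //=.
by rewrite andbT; apply: agr.
Qed.

End States.

Lemma nodepF_has (Register Location Value : finType) (Mode : Type)
    (S : Stmt Register Location Value Mode)
    (I : eqType) (V : I -> Register -> bool) (L : seq I) :
  (forall i, i \in L -> ~ depF S (V i)) -> ~ depF S (fun r => has (V ^~ r) L).
Proof.
case: S => [eps d | n kappa] /= nodepL; last exact: nodep_has.
case=> [D | [v D]]; move: D; apply: nodep_has => i iL D; apply: (nodepL i iL).
  by left.
by right; exists v.
Qed.

Section ThreadRun.
Variables (Thread Register Location Value : finType) (Mode : Type) (rlx : Mode).
Variables (P : Program Thread Register Location Value Mode)
  (G : Graph Thread Location Value Mode) (T : Thread).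

Local Notation kk := (kk P G T).
Local Notation sg := (sg P G T).
Local Notation stmt_t := (stmt_t P G T).
Local Notation delta_at := (delta_at rlx P G T).
Local Notation vis := (vis rlx P G T).
Local Notation readbot := (readbot rlx P G T).
Local Notation lt_N := (lt_N rlx P G T).

Lemma kkS t : kk t.+1 =
  match stmt_t t with
  | Step _ _ => (kk t).+1
  | Await n kappa => if kappa (sg t) then kk t - n else (kk t).+1
  end.
Proof.
rewrite /stmt_t /kk /sg /=; case: (conf P G T t) => k s /=.
by case: (stmt_at P T k).
Qed.

Lemma sgS t : sg t.+1 = upd (sg t) (delta_at t).
Proof.
rewrite /delta_at /readbot /vv /ev /ev_of /stmt_t /kk /sg /=.
case: (conf P G T t) => k s /=.
by case: (stmt_at P T k) => //= eps d; case: ifP.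
Qed.

Lemma kk_leq t : kk t <= t.
Proof.
elim: t => [//|t IH]; rewrite kkS.
case: (stmt_t t) => [_ _|n kappa]; last case: (kappa _); lia.
Qed.

Lemma vis_self t r : vis t t.+1 r = in_dom (delta_at t) r.
Proof. by rewrite /vis subnn /= andbT. Qed.

Lemma vis_succ t u r : t < u ->
  vis t u.+1 r = vis t u r && ~~ in_dom (delta_at u) r.
Proof.
move=> tu; rewrite /vis subSn // -[(u - t.+1).+1]addn1 iotaD all_cat /=.
by rewrite andbT andbA subnKC.
Qed.

Lemma sg_agree_off_vis t i :
  agree_off (fun r => has (fun t0 => vis t0 (t + i) r) (iota t i))
    (sg t) (sg (t + i)).
Proof.
elim: i => [|i IH] r; first by rewrite addn0.
rewrite addnS sgS -[i.+1]addn1 iotaD has_cat /= vis_self orbF.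
case D: (in_dom (delta_at (t + i)) r); first by rewrite orbT.
rewrite orbF upd_out ?D // => nvis; apply: IH.
rewrite (eq_in_has (a2 := fun t0 => vis t0 (t + i).+1 r)) // => t0.
by rewrite mem_iota => /andP [_ t0i]; rewrite vis_succ ?D ?andbT //; lia.
Qed.

Lemma lt_N_le t t' : lt_N t -> t' <= t -> lt_N t'.
Proof.
move=> [ok nrb] t't; split=> t'' t''t'; [apply: ok | apply: nrb]; lia.
Qed.

Lemma lt_N_succ t : lt_N t.+1 <->
  [/\ lt_N t, ~~ readbot t, kk t.+1 < size (code P T)
    & exists e, gE G (T, t.+1, e)].
Proof.
split=> [N1 | [[ok nrb] nrbt kk1 gE1]].
  have [ok nrb] := N1; have [kk1 gE1] := ok t.+1 (leqnn _).
  by split=> //; [exact: lt_N_le N1 _ | exact: nrb].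
split=> t' t't.
  by case: (eqVneq t' t.+1) => [-> // | ne]; apply: ok; lia.
by case: (eqVneq t' t) => [-> // | ne]; apply: nrb; lia.
Qed.

Lemma lt_N_last t :
  (forall t', t' < t -> kk t' < size (code P T) /\ exists e, gE G (T, t', e)) ->
  (forall t', t' < t -> ~~ readbot t') ->
  lt_N t <-> kk t < size (code P T) /\ exists e, gE G (T, t, e).
Proof.
move=> ok nrb; split=> [[okt _] | okt]; first exact: okt.
by split=> // t' t't; case: (eqVneq t' t) => [-> // | ne]; apply: ok; lia.
Qed.

Hypothesis wfP : wf_program P.

(* A backward jump into the window of an await needs either an await inside
   that window or an await whose own window contains it; [wf_program] forbids
   both. *)
Lemma kk_enter_window t K n kappa :
  K < size (code P T) -> stmt_at P T K = Await _ _ n kappa ->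
  kk t < size (code P T) -> K - n < kk t.+1 <= K -> kk t.+1 = (kk t).+1.
Proof.
move=> KP SK ktP win; have [nK noK] := wfP KP SK.
move: win; rewrite kkS /stmt_t.
case St: (stmt_at P T (kk t)) => [// | n' kappa']; case: ifP => // _ win.
have [n'k nok] := wfP ktP St.
case: (ltngtP (kk t) K) => [ltK | gtK | eqK].
- suff: ~~ is_await (stmt_at P T (kk t)) by rewrite St.
  by apply: noK; lia.
- suff: ~~ is_await (stmt_at P T K) by rewrite SK.
  by apply: nok; lia.
- by move: St; rewrite eqK SK => -[eqn _]; lia.
Qed.

Lemma kk_before_await t n kappa :
  (forall t', t' <= t -> kk t' < size (code P T)) ->
  stmt_t t = Await _ _ n kappa ->
  forall j, j <= n -> kk (t - j) = kk t - j.
Proof.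
move=> ok St; have [nk _] := wfP (ok t (leqnn t)) St.
have nt := leq_trans nk (kk_leq t).
elim=> [|j IH] jn; first by rewrite !subn0.
have Etj : t - j = (t - j.+1).+1 by lia.
have := kk_enter_window (t := t - j.+1) (ok t (leqnn t)) St
  (ok _ (leq_subr _ _)).
rewrite -Etj IH ?(ltnW jn) // => /(_ _); lia.
Qed.

End ThreadRun.

Section TwoGraphs.
Variables (Thread Register Location Value : finType) (Mode : Type) (rlx : Mode).
Variables (P : Program Thread Register Location Value Mode)
  (G1 G2 : Graph Thread Location Value Mode) (T : Thread).

Lemma conf_eq_vof n :
  (forall t e, t < n -> vof G1 (T, t, e) = vof G2 (T, t, e)) ->
  forall t, t <= n -> conf P G1 T t = conf P G2 T t.
Proof.
move=> vofE; elim=> [// | t IH] tn /=.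
rewrite IH 1?ltnW //; case: (conf P G2 T t) => k s.
by case: (stmt_at P T k) => // eps d; rewrite vofE.
Qed.

Lemma ev_eq_vof t :
  (forall t e, vof G1 (T, t, e) = vof G2 (T, t, e)) ->
  ev rlx P G1 T t = ev rlx P G2 T t.
Proof. by move=> vofE; rewrite /ev /kk /sg (conf_eq_vof (n := t)). Qed.

Lemma lt_N_eq_vof :
  (forall t e, vof G1 (T, t, e) = vof G2 (T, t, e)) ->
  (forall t e, gE G1 (T, t, e) <-> gE G2 (T, t, e)) ->
  forall t, lt_N rlx P G1 T t <-> lt_N rlx P G2 T t.
Proof.
move=> vofE gEE t.
have confE t' : conf P G1 T t' = conf P G2 T t'.
  exact: (conf_eq_vof (n := t')).
have kkE t' : kk P G1 T t' = kk P G2 T t' by rewrite /kk confE.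
have rbE t' : readbot rlx P G1 T t' = readbot rlx P G2 T t'.
  by rewrite /readbot /vv /ev /kk /sg confE vofE.
have gE'E t' : (exists e, gE G1 (T, t', e)) <-> (exists e, gE G2 (T, t', e)).
  by split=> -[e]; exists e; apply/gEE.
rewrite /lt_N; setoid_rewrite kkE; setoid_rewrite rbE; setoid_rewrite gE'E.
by [].
Qed.

Lemma lockstep t1 t2 R :
  kk P G1 T t1 = kk P G2 T t2 ->
  agree_off R (sg P G1 T t1) (sg P G2 T t2) ->
  ~ depF (stmt_t P G2 T t2) R ->
  (forall e, vof G1 (T, t1, e) = vof G2 (T, t2, e)) ->
  [/\ ev rlx P G1 T t1 = ev rlx P G2 T t2,
      readbot rlx P G1 T t1 = readbot rlx P G2 T t2,
      delta_at rlx P G1 T t1 = delta_at rlx P G2 T t2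
    & kk P G1 T t1.+1 = kk P G2 T t2.+1].
Proof.
move=> kkE agr + vofE.
rewrite /delta_at /readbot /vv /ev /ev_of !kkS /stmt_t kkE.
case: (stmt_at P T (kk P G2 T t2)) => [eps d | n kappa] /= ndep.
  have epsE : eps (sg P G1 T t1) = eps (sg P G2 T t2).
    by apply: nodepP agr => D; apply: ndep; left.
  have dE v : d (sg P G1 T t1) v = d (sg P G2 T t2) v.
    by apply: (nodepP (f := d^~ v)) agr => D; apply: ndep; right; exists v.
  by rewrite epsE (vofE (eps _)) dE.
by rewrite (nodepP ndep agr).
Qed.

End TwoGraphs.

Section Renaming.
Variables (Thread Location Value : finType) (Mode : Type).
Variables (G : Graph Thread Location Value Mode) (T : Thread) (s l : nat).
Implicit Types x y : Triple Thread Location Value Mode.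

Lemma ren_invK x : ren T s l (ren_inv T s l x) = Some x.
Proof.
case: x => [[U t] e] /=; case: (eqVneq U T) => [-> | UT] /=; last by rewrite UT.
case: ifP => ts /=; first by rewrite eqxx ts.
by rewrite eqxx ifF ?ifT ?addnK //; lia.
Qed.

Lemma ren_SomeK x y : ren T s l y = Some x -> y = ren_inv T s l x.
Proof.
case: y => [[U t] e] /=; case: (eqVneq U T) => [-> | UT] /=; last first.
  by case=> <-; rewrite /= UT.
case: ifP => [ts [<-] | ts]; first by rewrite /= eqxx ts.
case: ifP => // lt [<-]; rewrite /= eqxx ifF; last by lia.
by congr (_, _, _); lia.
Qed.

Definition ren_idx (U : Thread) (t : nat) : nat :=
  if (U != T) || (t < s) then t else t + l.+1.

Lemma ren_inv_idx U t (e : Event Location Value Mode) :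
  ren_inv T s l (U, t, e) = (U, ren_idx U t, e).
Proof. by rewrite /ren_idx /=; case: ifP. Qed.

Lemma gE_del x : gE (del G T s l) x <-> gE G (ren_inv T s l x).
Proof.
split=> [[y [Gy /ren_SomeK <-]] // | Gx].
by exists (ren_inv T s l x); rewrite ren_invK.
Qed.

Lemma vof_del x :
  (forall y w, grf G y = Some w -> ren T s l w <> None) ->
  vof (del G T s l) x = vof G (ren_inv T s l x).
Proof.
move=> rf_kept; rewrite /vof /=.
case rfx: (grf G (ren_inv T s l x)) => [w|] //=.
case renw: (ren T s l w) => [w'|] /=; last by have := rf_kept _ _ rfx.
by rewrite (ren_SomeK renw); case: w' {renw} => [[U t] e] /=; case: ifP.
Qed.

End Renaming.

Lemma cons_reindex (Thread Register Location Value : finType) (Mode : Type)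
    (rlx : Mode) (P : Program Thread Register Location Value Mode)
    (G G' : Graph Thread Location Value Mode) (idx : Thread -> nat -> nat) :
  (forall U t e, gE G' (U, t, e) <-> gE G (U, idx U t, e)) ->
  (forall U t, lt_N rlx P G' U t <-> lt_N rlx P G U (idx U t)) ->
  (forall U t, lt_N rlx P G' U t -> ev rlx P G' U t = ev rlx P G U (idx U t)) ->
  cons rlx P G -> cons rlx P G'.
Proof.
move=> gEE lt_NE evE consG [[U t] e]; rewrite gEE consG; split.
  move=> [U' [t' [lt_N' [EU Et Ee]]]]; subst U' t' e.
  have lt_N'' : lt_N rlx P G' U t by apply/lt_NE.
  by exists U, t; rewrite evE.
move=> [U' [t' [lt_N' [EU Et Ee]]]]; subst U' t' e.
by exists U, (idx U t); rewrite evE //; split=> //; apply/lt_NE.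
Qed.

Section Deletion.
Variables (Thread Register Location Value : finType) (Mode : Type) (rlx : Mode).
Variables (P : Program Thread Register Location Value Mode)
  (G : Graph Thread Location Value Mode).
Hypotheses (wfP : wf_program P) (wfG : wf_graph G)
  (consG : cons rlx P G) (BEG : BE rlx P G).
Variables (T : Thread) (q tend : nat).
Hypothesis fail : fail_end rlx P G T q tend.

Local Notation l := (alen P G T tend).
Local Notation s := (tend - l).
Local Notation G' := (del G T s l).
(* The registers whose value at step u was last written inside the deleted
   iteration. *)
Local Notation vis_window u :=
  (fun r => has (fun t0 => vis rlx P G T t0 u r) (iota s l)).

Lemma lt_N_tend : lt_N rlx P G T tend.
Proof. by case: fail => -[]. Qed.

Lemma stmt_tend :
  exists2 kappa, stmt_t P G T tend = Await _ _ l kappa & kappa (sg P G T tend).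
Proof.
case: fail => -[_ [+ _]]; rewrite /akappa /alen.
by case: (stmt_t P G T tend) => // n kappa _ ?; exists kappa.
Qed.

Lemma start_len : s + l = tend.
Proof.
have [kappa St _] := stmt_tend.
have [nk _] := wfP ((lt_N_tend.1 tend (leqnn _)).1) St.
by rewrite subnK // (leq_trans nk (kk_leq _ _ _ _)).
Qed.

Lemma ev_tend : ev rlx P G T tend = EFence _ _ rlx.
Proof. by have [kappa] := stmt_tend; rewrite /ev /ev_of /stmt_t => ->. Qed.

Lemma delta_tend : delta_at rlx P G T tend = empty_update Value.
Proof. by have [kappa] := stmt_tend; rewrite /delta_at => ->. Qed.

Lemma kk_after_fail : kk P G T tend.+1 = kk P G T s.
Proof.
have [kappa St fails] := stmt_tend.
rewrite kkS St fails (kk_before_await wfP _ St) // => t' t'tend.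
exact: (lt_N_tend.1 t' t'tend).1.
Qed.

(* The deleted iteration writes nothing: BE for its body, a fence at its end. *)
Lemma rf_not_deleted y w : grf G y = Some w -> ren T s l w <> None.
Proof.
move=> /wfG [_ [/consG [U [t [lt_N_t ->]]] [_]]] /=.
case: (eqVneq U T) => [-> | //] write; case: ifP => // ts; case: ifP => // tl.
case: (eqVneq t tend) => [tt | ltt]; first by move: write; rewrite tt ev_tend.
have win : s <= t < tend by move: ts tl ltt; have := start_len; lia.
by have [/negP] := BEG fail win.
Qed.

Lemma vof_G' x : vof G' x = vof G (ren_inv T s l x).
Proof. exact: vof_del rf_not_deleted. Qed.

Lemma conf_del_prefix t : t <= s -> conf P G' T t = conf P G T t.
Proof.
move=> ts; apply: conf_eq_vof ts => t' e t's.
by rewrite vof_G' ren_inv_idx /ren_idx t's orbT.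
Qed.

Lemma vis_window_succ u r : tend <= u ->
  vis_window u.+1 r = ~~ in_dom (delta_at rlx P G T u) r && vis_window u r.
Proof.
move=> tu /=; rewrite (eq_in_has (a2 := fun t0 =>
  ~~ in_dom (delta_at rlx P G T u) r && vis rlx P G T t0 u r)); last first.
  move=> t0; rewrite mem_iota => win; rewrite vis_succ 1?andbC //.
  by have := start_len; lia.
by case: (in_dom _ r) => //=; elim: (iota s l).
Qed.

Lemma nodep_vis_window u : lt_N rlx P G T u -> tend <= u ->
  ~ depF (stmt_t P G T u) (vis_window u).
Proof.
move=> lt_N_u tu; apply: nodepF_has => t0; rewrite mem_iota => win D.
have sl := start_len; have t0win : s <= t0 < tend by lia.
have [_ /(_ u lt_N_u)] := BEG fail t0win.
have t0u : t0 <= u by lia.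
by move=> /(_ (conj t0u D)); lia.
Qed.

Lemma idx_suffix i : ren_idx T s l T (s + i) = tend.+1 + i.
Proof.
by rewrite /ren_idx eqxx /= ltnNge leq_addr /=; have := start_len; lia.
Qed.

Lemma del_lockstep i : lt_N rlx P G T (tend.+1 + i) ->
  kk P G' T (s + i) = kk P G T (tend.+1 + i) ->
  agree_off (vis_window (tend.+1 + i))
    (sg P G' T (s + i)) (sg P G T (tend.+1 + i)) ->
  [/\ ev rlx P G' T (s + i) = ev rlx P G T (tend.+1 + i),
      readbot rlx P G' T (s + i) = readbot rlx P G T (tend.+1 + i),
      delta_at rlx P G' T (s + i) = delta_at rlx P G T (tend.+1 + i)
    & kk P G' T (s + i).+1 = kk P G T (tend.+1 + i).+1].
Proof.
move=> lt_N_u kkE agr; apply: lockstep kkE agr _ _.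
  by apply: nodep_vis_window; rewrite // ltnW // ltnS leq_addr.
by move=> e; rewrite vof_G' ren_inv_idx idx_suffix.
Qed.

Lemma del_sim i : lt_N rlx P G T (tend + i) ->
  kk P G' T (s + i) = kk P G T (tend.+1 + i) /\
  agree_off (vis_window (tend.+1 + i))
    (sg P G' T (s + i)) (sg P G T (tend.+1 + i)).
Proof.
elim: i => [|i IH] lt_N_i.
  have kkE : kk P G' T s = kk P G T s by rewrite /kk conf_del_prefix.
  have sgE : sg P G' T s = sg P G T s by rewrite /sg conf_del_prefix.
  rewrite !addn0 kkE sgE kk_after_fail; split=> // r.
  rewrite vis_window_succ // delta_tend /= (sgS rlx) delta_tend /upd /=.
  have := sg_agree_off_vis (rlx := rlx) (P := P) (G := G) (T := T)
    (t := s) (i := l).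
  by rewrite start_len; apply.
have lt_N_u : lt_N rlx P G T (tend.+1 + i) by rewrite addSnnS.
have [kkE agr] := IH (lt_N_le lt_N_u (leqnSn _)).
have [_ _ deltaE kkE'] := del_lockstep lt_N_u kkE agr.
rewrite !addnS; split=> // r.
rewrite vis_window_succ 1?ltnW ?ltnS ?leq_addr // (sgS rlx P G' T (s + i)).
rewrite (sgS rlx P G T (tend.+1 + i)) deltaE andbC.
exact: upd_agree_off agr r.
Qed.

Lemma del_step i : lt_N rlx P G T (tend.+1 + i) ->
  [/\ ev rlx P G' T (s + i) = ev rlx P G T (tend.+1 + i),
      readbot rlx P G' T (s + i) = readbot rlx P G T (tend.+1 + i)
    & kk P G' T (s + i).+1 = kk P G T (tend.+1 + i).+1].
Proof.
move=> lt_N_u; have [kkE agr] := del_sim (lt_N_le lt_N_u (leqnSn _)).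
by have [] := del_lockstep lt_N_u kkE agr.
Qed.

Lemma del_prefix t : t < s ->
  [/\ kk P G' T t < size (code P T), exists e, gE G' (T, t, e)
    & ~~ readbot rlx P G' T t].
Proof.
move=> ts; have sl := start_len; have [ok nrb] := lt_N_tend.
have [kkP [e Ge]] := ok t (ltnW (leq_trans ts (leq_subr _ _))).
have confE := conf_del_prefix (ltnW ts).
have idxE e' : ren_inv T s l (T, t, e') = (T, t, e').
  by rewrite ren_inv_idx /ren_idx ts orbT.
split; first by rewrite /kk confE.
  by exists e; rewrite gE_del idxE.
rewrite /readbot /vv /ev /kk /sg confE vof_G' idxE.
by apply: nrb; lia.
Qed.

Lemma lt_N_del_suffix i :
  lt_N rlx P G' T (s + i) <-> lt_N rlx P G T (tend.+1 + i).
Proof.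
have gE_suffix j :
    (exists e, gE G' (T, s + j, e)) <-> exists e, gE G (T, tend.+1 + j, e).
  rewrite /iff; setoid_rewrite gE_del; setoid_rewrite ren_inv_idx.
  by rewrite idx_suffix.
elim: i => [|i IH].
  have := gE_suffix 0; rewrite !addn0 => gE0.
  have lt_N_0 : lt_N rlx P G T (tend + 0) by rewrite addn0; exact: lt_N_tend.
  have [kk0 _] := del_sim lt_N_0; rewrite !addn0 in kk0.
  rewrite lt_N_last => [| t' /del_prefix [] // | t' /del_prefix [] //].
  rewrite lt_N_succ; split=> [[kkP gEP] | [_ _ kkP gEP]].
    split; [exact: lt_N_tend | by rewrite /readbot ev_tend | by rewrite -kk0 |].
    exact/gE0.
  by rewrite kk0; split=> //; apply/gE0.
have := gE_suffix i.+1; rewrite !addnS => gES.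
rewrite !lt_N_succ.
split=> [[/IH lt_N_u nrb kkP gEP] | [lt_N_u nrb kkP gEP]];
  have [_ rbE kkE] := del_step lt_N_u.
  by split; [done | rewrite -rbE | rewrite -kkE | apply/gES].
by split; [apply/IH | rewrite rbE | rewrite kkE | apply/gES].
Qed.

Lemma lt_N_del U t :
  lt_N rlx P G' U t <-> lt_N rlx P G U (ren_idx T s l U t).
Proof.
rewrite /ren_idx; case: (eqVneq U T) => [-> | UT] /=; last first.
  apply: lt_N_eq_vof => t' e; first by rewrite vof_G' ren_inv_idx /ren_idx UT.
  by rewrite gE_del ren_inv_idx /ren_idx UT.
have sl := start_len; case: ltnP => ts.
  split=> _; first by apply: lt_N_le lt_N_tend _; lia.
  split=> t' t't; have t's : t' < s by lia.
    by have [] := del_prefix t's.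
  by have [] := del_prefix t's.
move: (t - s) (subnKC ts) => i <-; rewrite lt_N_del_suffix.
by have -> : s + i + l.+1 = tend.+1 + i by lia.
Qed.

Lemma ev_del U t : lt_N rlx P G' U t ->
  ev rlx P G' U t = ev rlx P G U (ren_idx T s l U t).
Proof.
rewrite /ren_idx; case: (eqVneq U T) => [-> | UT] /= lt_N_t; last first.
  by apply: ev_eq_vof => t' e; rewrite vof_G' ren_inv_idx /ren_idx UT.
have sl := start_len; case: ltnP => ts.
  by rewrite /ev /kk /sg conf_del_prefix // ltnW.
move: lt_N_t; move: (t - s) (subnKC ts) => i <- /lt_N_del_suffix lt_N_u.
have [-> _ _] := del_step lt_N_u.
by have -> : s + i + l.+1 = tend.+1 + i by lia.
Qed.

End Deletion.

Theorem lemma6 (Thread Register Location Value : finType) (Mode : Type) (rlx : Mode)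
  (P : Program Thread Register Location Value Mode)
  (G : Graph Thread Location Value Mode) :
  wf_program P -> wf_graph G -> cons rlx P G -> BE rlx P G ->
  forall (T : Thread) (q tend : nat),
    fail_end rlx P G T q tend ->
    cons rlx P (del G T (tend - alen P G T tend) (alen P G T tend)).
Proof.
move=> wfP wfG consG BEG T q tend fail.
apply: (cons_reindex (idx := ren_idx T (tend - alen P G T tend) (alen P G T tend))
  _ _ _ consG).
- by move=> U t e; rewrite gE_del ren_inv_idx.
- exact: (lt_N_del wfP wfG consG BEG fail).
- exact: (ev_del wfP wfG consG BEG fail).
Qed.
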